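(* Assume (A3) below. For any $\omega$ in the interior of the simplex $\Delta^{L-1}$, the diagonal matrix $W=\mathrm{diag}(\omega_1/\gamma_1^2,\dots,\omega_L/\gamma_L^2)$ is positive definite and satisfies $\lambda(W)=\omega$. For any $\omega\in\Delta^{L-1}$ (including the boundary), there exists a positive definite $W$ with $\lambda(W)=\omega$.
   Context: $D_i\in\{0,1\}$ is a treatment and $\mathbf Z_i=(Z_{1i},\dots,Z_{Li})'\in\{0,1\}^L$, $L\ge2$, are binary instruments. $p_\ell=P(Z_{\ell i}=1)$, $\pi_\ell=\mathbb E[D_i\mid Z_{\ell i}=1]-\mathbb E[D_i\mid Z_{\ell i}=0]$, $\gamma_\ell=\mathrm{Cov}(D_i,Z_{\ell i})=\pi_\ell p_\ell(1-p_\ell)$, $\boldsymbol\gamma=(\gamma_1,\dots,\gamma_L)'$, $\Sigma_Z=\mathrm{Var}(\mathbf Z_i)$. For a positive definite $W$, $\lambda(W)=(\lambda_1(W),\dots,\lambda_L(W))$ with $\lambda_\ell(W)=\gamma_\ell[W\boldsymbol\gamma]_\ell/(\boldsymbol\gamma'W\boldsymbol\gamma)$. $\Delta^{L-1}=\{\omega\in\mathbb R^L:\omega_\ell\ge0,\ \sum_\ell\omega_\ell=1\}$. Assumption (A3): $p_\ell>0$ and $\pi_\ell>0$ for all $\ell$, and $\Sigma_Z$ is positive definite. *)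

(* The joint law of (D_i, Z_i) is a probability mass function on
   the finite outcome space {0,1} x {0,1}^L. *)
From HB Require Import structures.
From mathcomp Require Import all_boot all_order all_algebra.
Set Implicit Arguments. Unset Strict Implicit. Unset Printing Implicit Defensive.
Import Order.TTheory GRing.Theory Num.Theory.
Local Open Scope ring_scope.

Definition outcome (L : nat) := (bool * {ffun 'I_L -> bool})%type.

Section IV.
Variables (R : realFieldType) (L : nat).


Definition is_pmf (P : {ffun outcome L -> R}) : Prop :=
  (forall x, 0 <= P x) /\ \sum_x P x = 1.

Variable P : {ffun outcome L -> R}.

Definition Expect (f : outcome L -> R) : R := \sum_x P x * f x.
Definition Dv (x : outcome L) : R := (x.1 : nat)%:R.
Definition Zv (l : 'I_L) (x : outcome L) : R := (x.2 l : nat)%:R.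
Definition Cov (f g : outcome L -> R) : R :=
  Expect (fun x => f x * g x) - Expect f * Expect g.

Definition pZ (l : 'I_L) : R := Expect (Zv l).
Definition condED (l : 'I_L) (b : bool) : R :=
  Expect (fun x => Dv x * (x.2 l == b)%:R) / Expect (fun x => (x.2 l == b)%:R).
Definition piZ (l : 'I_L) : R := condED l true - condED l false.
Definition gam (l : 'I_L) : R := Cov Dv (Zv l).
Definition gamv : 'cV[R]_L := \col_l gam l.
Definition SigmaZ : 'M[R]_L := \matrix_(i, j) Cov (Zv i) (Zv j).

Definition lambdaW (W : 'M[R]_L) (l : 'I_L) : R :=
  gam l * (W *m gamv) l 0 / (gamv^T *m W *m gamv) 0 0.

End IV.

Definition posdef (R : realFieldType) (n : nat) (W : 'M[R]_n) : Prop :=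
  W^T = W /\ forall x : 'cV[R]_n, x != 0 -> 0 < (x^T *m W *m x) 0 0.

Definition A3 (R : realFieldType) (L : nat) (P : {ffun outcome L -> R}) : Prop :=
  (forall l, 0 < pZ P l) /\ (forall l, 0 < piZ P l) /\ posdef (SigmaZ P).

Definition in_simplex (R : realFieldType) (L : nat) (w : 'I_L -> R) : Prop :=
  (forall l, 0 <= w l) /\ \sum_l w l = 1.
Definition in_simplex_interior (R : realFieldType) (L : nat) (w : 'I_L -> R) : Prop :=
  (forall l, 0 < w l) /\ \sum_l w l = 1.

(* By the law of total expectation gamma_l = pi_l p_l (1 - p_l), and p_l (1 - p_l) is the
   l-th diagonal entry of Sigma_Z, hence positive: every gamma_l is positive.  If W gamma = v
   with v_l = omega_l / gamma_l, then gamma' W gamma = sum_l omega_l = 1 and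
   lambda_l(W) = gamma_l v_l = omega_l.  In the interior W = diag(omega_l / gamma_l^2) does
   this.  On the boundary that matrix is singular, so take W = diag(d) + u u' with
   u = v - t gamma, t = 1 / (2 |gamma|^2) and d_l = (v_l / gamma_l + t) / 2 > 0: then
   u' gamma = 1/2, so W gamma = d o gamma + u / 2 = v, and W is positive definite as a
   positive diagonal matrix plus a positive semidefinite one. *)
From HB Require Import structures.
From mathcomp Require Import all_boot all_order all_algebra.
From mathcomp Require Import ring.
Set Implicit Arguments. Unset Strict Implicit.
Import Order.TTheory GRing.Theory Num.Theory.
Local Open Scope ring_scope.

Section PositiveDefinite.
Variables (R : realFieldType) (n : nat).

Lemma posdef_diag_gt0 (S : 'M[R]_n) i : posdef S -> 0 < S i i.
Proof.
case=> _ S_pos; have := S_pos (delta_mx i 0).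
rewrite trmx_delta -rowE -colE !mxE; apply.
apply/negP => /eqP/matrixP/(_ i 0); rewrite !mxE !eqxx.
by move/eqP; rewrite oner_eq0.
Qed.

Lemma posdef_diag (d : 'rV[R]_n) : (forall i, 0 < d 0 i) -> posdef (diag_mx d).
Proof.
move=> d_pos; split; first exact: tr_diag_mx.
move=> x x_neq0; rewrite mxE.
have terms_ge0 i : true -> 0 <= (x^T *m diag_mx d) 0 i * x i 0.
  by move=> _; rewrite mul_mx_diag !mxE mulrAC -expr2 mulr_ge0 ?sqr_ge0 ?ltW.
rewrite lt_def sumr_ge0 // andbT; apply/eqP => /(psumr_eq0P terms_ge0) x0.
move/eqP: x_neq0; apply; apply/matrixP => i j; rewrite (ord1 j) mxE.
have /eqP := x0 i isT; rewrite mul_mx_diag !mxE mulrAC -expr2 mulf_eq0.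
by rewrite (negbTE (lt0r_neq0 (d_pos i))) orbF sqrf_eq0 => /eqP.
Qed.

Lemma posdefD_rank1 (A : 'M[R]_n) (u : 'cV[R]_n) :
  posdef A -> posdef (A + u *m u^T).
Proof.
case=> A_sym A_pos; split; first by rewrite linearD /= A_sym trmx_mul trmxK.
move=> x x_neq0; rewrite mulmxDr mulmxDl mxE.
have -> : (x^T *m (u *m u^T) *m x) 0 0 = ((u^T *m x) 0 0) ^+ 2.
  rewrite !mulmxA -mulmxA mxE big_ord1 expr2; congr (_ * _).
  by rewrite !mxE; apply: eq_bigr => i _; rewrite !mxE mulrC.
by rewrite ltr_wpDr ?sqr_ge0 ?A_pos.
Qed.

Lemma posdef_solution (g v : 'cV[R]_n) :
  (forall i, 0 < g i 0) -> (forall i, 0 <= v i 0) -> (g^T *m v) 0 0 = 1 ->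
  exists W : 'M[R]_n, posdef W /\ W *m g = v.
Proof.
move=> g_pos v_ge0 gv1; have g_neq0 i : g i 0 != 0 by exact: lt0r_neq0.
have gv : \sum_i g i 0 * v i 0 = 1.
  by rewrite -gv1 mxE; apply: eq_bigr => i _; rewrite mxE.
pose g2 := \sum_i g i 0 ^+ 2.
have g2_gt0 : 0 < g2.
  have sq_ge0 i : true -> 0 <= g i 0 ^+ 2 by move=> _; exact: sqr_ge0.
  rewrite lt_def sumr_ge0 // andbT; apply/eqP => /(psumr_eq0P sq_ge0) g0.
  move/eqP: gv; rewrite big1 ?(eq_sym 0) ?oner_eq0 // => i _.
  by move/eqP: (g0 i isT); rewrite sqrf_eq0 => /eqP ->; rewrite mul0r.
pose t := (2 * g2)^-1.
pose u := v - t *: g.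
pose d := \row_i ((v i 0 / g i 0 + t) / 2).
have ug_half : (u^T *m g) 0 0 = 2^-1.
  rewrite mxE (eq_bigr (fun j => g j 0 * v j 0 - t * g j 0 ^+ 2)) => [|j _]; last first.
    by rewrite !mxE; ring.
  by rewrite sumrB -mulr_sumr gv -/g2 /t; field; rewrite (lt0r_neq0 g2_gt0).
exists (diag_mx d + u *m u^T); split.
  apply/posdefD_rank1/posdef_diag => i; rewrite mxE divr_gt0 //.
  by rewrite ltr_wpDl ?divr_ge0 ?v_ge0 ?ltW // invr_gt0 mulr_gt0.
apply/matrixP => i j.
rewrite (ord1 j) mulmxDl mul_diag_mx -mulmxA !mxE big_ord1 ug_half !mxE.
by field; rewrite g_neq0.
Qed.

End PositiveDefinite.

Section Moments.
Variables (R : realFieldType) (L : nat) (P : {ffun outcome L -> R}).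

Lemma eq_Expect (f g : outcome L -> R) : f =1 g -> Expect P f = Expect P g.
Proof. by move=> fg; apply: eq_bigr => x _; rewrite fg. Qed.

Lemma ExpectB (f g : outcome L -> R) :
  Expect P (fun x => f x - g x) = Expect P f - Expect P g.
Proof. by rewrite /Expect -sumrB; apply: eq_bigr => x _; rewrite mulrBr. Qed.

Lemma Expect1 : is_pmf P -> Expect P (fun=> 1) = 1.
Proof. by case=> _ sumP1; rewrite /Expect; under eq_bigr do rewrite mulr1. Qed.

Variable l : 'I_L.

Local Notation EDZ := (Expect P (fun x => Dv R x * Zv R l x)).

Lemma SigmaZ_diag : SigmaZ P l l = pZ P l * (1 - pZ P l).
Proof.
rewrite mxE /Cov (@eq_Expect _ (Zv R l)); first by rewrite /pZ mulrBr mulr1.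
by move=> x; rewrite /Zv; case: (x.2 l); rewrite ?mulr1 ?mulr0.
Qed.

Lemma condED_true : condED P l true = EDZ / pZ P l.
Proof.
by rewrite /condED /pZ; congr (_ * _^-1); apply: eq_Expect => x;
  rewrite /Zv; case: (x.2 l).
Qed.

Lemma condED_false :
  is_pmf P -> condED P l false = (Expect P (@Dv R L) - EDZ) / (1 - pZ P l).
Proof.
move=> pmfP; rewrite /condED /pZ -[in RHS](Expect1 pmfP) -!ExpectB.
by congr (_ * _^-1); apply: eq_Expect => x; rewrite /Zv; case: (x.2 l) => /=; ring.
Qed.

Lemma gam_factor :
  is_pmf P -> pZ P l != 0 -> 1 - pZ P l != 0 ->
  gam P l = piZ P l * (pZ P l * (1 - pZ P l)).
Proof.
move=> pmfP p_neq0 q_neq0.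
rewrite /piZ condED_true condED_false // /gam /Cov -/(pZ P l).
by field; rewrite p_neq0 q_neq0.
Qed.

Lemma gam_gt0 : is_pmf P -> A3 P -> 0 < gam P l.
Proof.
move=> pmfP [pZ_gt0 [piZ_gt0 SigmaZ_posdef]].
have q_gt0 : 0 < 1 - pZ P l.
  by rewrite -(pmulr_rgt0 _ (pZ_gt0 l)) -SigmaZ_diag posdef_diag_gt0.
by rewrite gam_factor ?mulr_gt0 ?lt0r_neq0.
Qed.

End Moments.

Lemma lambdaW_eq (R : realFieldType) (L : nat) (P : {ffun outcome L -> R})
    (W : 'M[R]_L) (w : 'I_L -> R) :
  (forall l, gam P l != 0) -> \sum_l w l = 1 ->
  W *m gamv P = \col_l (w l / gam P l) -> forall l, lambdaW P W l = w l.
Proof.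
move=> gam_neq0 sum_w1 Wgam l; rewrite /lambdaW -mulmxA Wgam !mxE.
rewrite (eq_bigr w) => [|j _]; last by rewrite !mxE; field.
by rewrite sum_w1 divr1; field.
Qed.

Theorem lemma2 (R : realFieldType) (L : nat) (P : {ffun outcome L -> R}) :
  (1 < L)%N -> is_pmf P -> A3 P ->
  (forall w : 'I_L -> R, in_simplex_interior w ->
     let W := diag_mx (\row_l (w l / gam P l ^+ 2)) in
     posdef W /\ forall l, lambdaW P W l = w l) /\
  (forall w : 'I_L -> R, in_simplex w ->
     exists W : 'M[R]_L, posdef W /\ forall l, lambdaW P W l = w l).
Proof.
move=> _ pmfP A3P; have gamma_gt0 l : 0 < gam P l by exact: gam_gt0.
have gam_neq0 l : gam P l != 0 by exact: lt0r_neq0.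
split=> [w [w_gt0 sum_w1] W|w [w_ge0 sum_w1]].
  split; first by apply: posdef_diag => l; rewrite mxE divr_gt0 ?exprn_gt0.
  apply: lambdaW_eq => //; apply/matrixP => i j.
  by rewrite (ord1 j) mul_diag_mx !mxE; field.
have [W [W_posdef Wgam]] :
    exists W : 'M[R]_L, posdef W /\ W *m gamv P = \col_l (w l / gam P l).
  apply: posdef_solution => [i|i|]; rewrite mxE; first exact: gamma_gt0.
    exact: divr_ge0 (w_ge0 i) (ltW (gamma_gt0 i)).
  by rewrite -sum_w1; apply: eq_bigr => l _; rewrite !mxE; field.
by exists W; split; last exact: lambdaW_eq.
Qed.
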